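(* Let $A$ be an eNTA (with any finite number of clocks) and let $\gamma=q_0\tau_1q_1\cdots\tau_nq_n$ be a reachable path of $A$. For each $1\le i\le n$, the set $T_i$ of times at which $\tau_i$ is taken, over all runs along $\gamma$, is one of the following: a single point $\{n\}$ with $n\in\mathbb N_0$, or an interval (open, closed or half-open) with end-points $m<n$, where $m\in\mathbb N_0$ and $n\in\mathbb N\cup\{\infty\}$. Consequently, the timestamp of the $i$-th event, namely $T_i\times\{a_i\}$ where $a_i$ is the action of $\tau_i$, is a labeled integral point or a labeled interval of this form.
   Context: **Automata.** An eNTA (non-deterministic timed automaton with silent transitions) is a tuple $A=(\mathcal{Q},q_0,\Sigma_\epsilon,\mathcal{C},\mathcal{T})$ with the following components. - $\mathcal{Q}$ is a finite set of locations and $q_0$ is the initial location. - $\Sigma$ is a finite set of observable actions, and $\Sigma_\epsilon=\Sigma\cup\{\epsilon\}$, where $\epsilon$ is silent. - $\mathcal{C}$ is a finite set of clocks. - $\mathcal{T}$ is a finite set of transitions $(q,a,g,\mathcal{C}_{rst},q')$ with $a\in\Sigma_\epsilon$, $\mathcal C_{rst}\subseteq\mathcal C$ the clocks reset, and guard $g$ a finite conjunction of constraints $c\sim n$ with $c\in\mathcal C$, $\sim\in\{<,\le,=,\ge,>\}$ and $n\in\mathbb N_0$. **Runs.** A run is a finite sequence $$(q_0,\mathbf 0)\xrightarrow{d_1}(q_0,\mathbf 0+d_1)\xrightarrow{\tau_1}(q_1,v_1)\xrightarrow{d_2}\cdots\xrightarrow{\tau_k}(q_k,v_k),$$ where $d_i\in\mathbb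 R_{\ge0}$, $\tau_i=(q_{i-1},a_i,g_i,\mathcal C_i,q_i)\in\mathcal T$, $v_0=\mathbf 0$, $v_{i-1}+d_i\models g_i$, and $v_i$ equals $v_{i-1}+d_i$ with the clocks in $\mathcal C_i$ set to $0$. The $i$-th transition is taken at time $t_i=d_1+\dots+d_i$. **Paths.** A path $\gamma=q_0\tau_1q_1\cdots\tau_nq_n$ is a sequence of transitions with $\tau_i$ going from $q_{i-1}$ to $q_i$. A run along $\gamma$ uses exactly the transitions $\tau_1,\dots,\tau_n$ in order, and $\gamma$ is reachable if such a run exists. *)

From Stdlib Require Import Reals List Arith Bool.
Import ListNotations.
Open Scope R_scope.

(* Clocks, locations and observable actions are encoded by natural-number
   indices; an eNTA declares how many of each it has (finite sets). *)
Definition clock := nat.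
Definition loc := nat.
(* An action in Sigma_eps: [Some a] is the observable action a, [None] is epsilon. *)
Definition action := option nat.

Inductive cmp := CLt | CLe | CEq | CGe | CGt.

Record constr := Constr { c_clock : clock; c_op : cmp; c_bound : nat }.

Definition guard := list constr.

Record transition := Trans {
  t_src : loc; t_act : action; t_guard : guard; t_rst : list clock; t_dst : loc }.

Record eNTA := ENTA {
  n_locs : nat;
  q_init : loc;
  n_acts : nat;
  n_clocks : nat;
  trans : list transition
}.

Definition valuation := clock -> R.

Definition sat_op (op : cmp) (x y : R) : Prop :=
  match op with
  | CLt => x < y | CLe => x <= y | CEq => x = y | CGe => x >= y | CGt => x > y
  end.

Definition sat_constr (v : valuation) (k : constr) : Prop :=
  sat_op (c_op k) (v (c_clock k)) (INR (c_bound k)).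

Definition sat_guard (v : valuation) (g : guard) : Prop :=
  Forall (sat_constr v) g.

Definition delay (v : valuation) (d : R) : valuation := fun c => v c + d.

Definition reset (v : valuation) (rst : list clock) : valuation :=
  fun c => if existsb (Nat.eqb c) rst then 0 else v c.

Definition well_formed (A : eNTA) : Prop :=
  (q_init A < n_locs A)%nat /\
  Forall (fun t =>
    (t_src t < n_locs A)%nat /\ (t_dst t < n_locs A)%nat /\
    (match t_act t with Some a => (a < n_acts A)%nat | None => True end) /\
    Forall (fun k => (c_clock k < n_clocks A)%nat) (t_guard t) /\
    Forall (fun c => (c < n_clocks A)%nat) (t_rst t)) (trans A).

(* gamma = q0 tau_1 q1 ... tau_n qn, represented by the list of transitions
   [tau_1; ...; tau_n] (the locations are determined by the transitions). *)
Fixpoint path_from (A : eNTA) (q : loc) (gamma : list transition) : Prop :=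
  match gamma with
  | [] => True
  | tau :: rest => In tau (trans A) /\ t_src tau = q /\ path_from A (t_dst tau) rest
  end.

Definition is_path (A : eNTA) (gamma : list transition) : Prop :=
  path_from A (q_init A) gamma.

Fixpoint run_from (q : loc) (v : valuation) (gamma : list transition) (ds : list R)
  : Prop :=
  match gamma, ds with
  | [], [] => True
  | tau :: rest, d :: ds' =>
      0 <= d /\ t_src tau = q /\ sat_guard (delay v d) (t_guard tau) /\
      run_from (t_dst tau) (reset (delay v d) (t_rst tau)) rest ds'
  | _, _ => False
  end.

Definition zero_val : valuation := fun _ => 0.

Definition run_along (A : eNTA) (gamma : list transition) (ds : list R) : Prop :=
  run_from (q_init A) zero_val gamma ds.

Definition reachable (A : eNTA) (gamma : list transition) : Prop :=
  exists ds, run_along A gamma ds.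

Definition time_of (ds : list R) (i : nat) : R :=
  fold_right Rplus 0 (firstn i ds).

Definition times (A : eNTA) (gamma : list transition) (i : nat) : R -> Prop :=
  fun t => exists ds, run_along A gamma ds /\ time_of ds i = t.

Definition integral_point (S : R -> Prop) : Prop :=
  exists n : nat, forall t, S t <-> t = INR n.

(* S is an interval with end-points m < n, m in N_0, n in N u {oo}
   (ub = None encodes oo); lc / rc say whether the left / right end-point is
   included (rc is irrelevant when ub = None). *)
Definition integral_interval (S : R -> Prop) : Prop :=
  exists (m : nat) (ub : option nat) (lc rc : bool),
    (match ub with Some n => (m < n)%nat | None => True end) /\
    forall t, S t <->
      ((if lc then INR m <= t else INR m < t) /\
       match ub with
       | Some n => if rc then t <= INR n else t < INR n
       | None => True
       end).

(* The set of times of the i-th transition is nonempty, nonnegative and convex: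
   pointwise convex combinations of the delay sequences of two runs along the same
   path again form a run, because guards are convex.  It is moreover saturated:
   if it meets an open unit interval (k, k+1), it contains all of it.  Indeed a
   strictly increasing map f commuting with integer translations preserves every
   constraint between differences of absolute times and integers, and clock values
   are such differences; warping the absolute times of a run by f gives a new run,
   and f can be chosen to move any point of (k, k+1) to any other.  A nonnegative,
   convex, saturated, nonempty set of reals has integral end-points. *)

From Stdlib Require Import Reals List.
From Stdlib Require Import Lra Lia Classical Wf_nat.
Import ListNotations.
Open Scope R_scope.

Definition order_convex (S : R -> Prop) : Prop :=
  forall t1 t2 t, S t1 -> S t2 -> t1 <= t <= t2 -> S t.

Definition unit_saturated (S : R -> Prop) : Prop :=
  forall (k : nat) t t', INR k < t < INR k + 1 -> INR k < t' < INR k + 1 ->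
    S t -> S t'.

Definition shift_equivariant (f : R -> R) : Prop :=
  forall x (n : nat), f (x + INR n) = f x + INR n.

(** * Sets with integral end-points *)

Lemma least_nat (P : nat -> Prop) :
  (exists n, P n) -> exists n, P n /\ forall k, P k -> (n <= k)%nat.
Proof.
  intro HP.
  destruct (dec_inh_nat_subset_has_unique_least_element P (fun n => classic (P n)) HP)
    as [n [[Hn Hmin] _]].
  now exists n.
Qed.

Lemma exists_bool_iff (P : Prop) : exists b : bool, b = true <-> P.
Proof.
  destruct (classic P) as [HP | HnP]; [exists true | exists false];
    split; intro; easy.
Qed.

Lemma integral_interval_of_interior (S : R -> Prop) (m : nat) (ub : option nat) :
  match ub with Some n => (m < n)%nat | None => True end ->
  (forall t, S t -> INR m <= t /\ match ub with Some n => t <= INR n | None => True end) ->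
  (forall t, INR m < t -> match ub with Some n => t < INR n | None => True end -> S t) ->
  integral_interval S.
Proof.
  intros Hmn Hbounds Hinterior.
  destruct (exists_bool_iff (S (INR m))) as [lc Hlc].
  destruct (exists_bool_iff (match ub with Some n => S (INR n) | None => True end))
    as [rc Hrc].
  exists m, ub, lc, rc; split; [exact Hmn |]; intro t; split.
  - intro Ht; destruct (Hbounds t Ht) as [Hlow Hup]; split.
    + destruct lc; [exact Hlow |].
      destruct (Req_dec t (INR m)) as [-> | Hne]; [now apply Hlc in Ht | lra].
    + destruct ub as [n |]; [| exact I].
      destruct rc; [exact Hup |].
      destruct (Req_dec t (INR n)) as [-> | Hne]; [now apply Hrc in Ht | lra].
  - intros [Hlow Hup].
    destruct (Req_dec t (INR m)) as [-> | Hne_m].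
    { destruct lc; [now apply Hlc | lra]. }
    assert (Hm : INR m < t) by (destruct lc; lra).
    destruct ub as [n |].
    + destruct (Req_dec t (INR n)) as [-> | Hne_n].
      { destruct rc; [now apply Hrc | lra]. }
      apply Hinterior; [exact Hm | destruct rc; lra].
    + now apply Hinterior.
Qed.

Section UnitSaturatedSets.

Variable E : R -> Prop.
Hypothesis E_nonneg : forall t, E t -> 0 <= t.
Hypothesis E_convex : order_convex E.
Hypothesis E_saturated : unit_saturated E.

Lemma unit_saturated_fill (m : nat) tm t x :
  E tm -> E t -> INR m <= tm < INR m + 1 -> INR m < x < t -> E x.
Proof.
  intros Htm Ht Hm Hx.
  destruct (Rle_lt_dec tm x).
  - apply (E_convex tm t); auto; lra.
  - apply (E_saturated m tm); auto; lra.
Qed.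

Lemma exists_integral_infimum :
  (exists t, E t) ->
  exists m : nat, (forall t, E t -> INR m <= t) /\ exists tm, E tm /\ tm < INR m + 1.
Proof.
  intros [t0 Ht0].
  destruct (least_nat (fun m => exists t, E t /\ t < INR m + 1)) as [m [Hm Hmin]].
  { destruct (INR_unbounded t0) as [n Hn]; exists n, t0; split; [exact Ht0 | lra]. }
  exists m; split; [| exact Hm].
  intros t Ht; apply Rnot_lt_le; intro Hlt.
  destruct m as [| p]; [simpl in Hlt; specialize (E_nonneg t Ht); lra |].
  assert (Hp : (S p <= p)%nat) by (apply Hmin; exists t; rewrite <- S_INR; auto).
  lia.
Qed.

Lemma unit_saturated_integral_shape :
  (exists t, E t) -> integral_point E \/ integral_interval E.
Proof.
  intro Hne.
  destruct (exists_integral_infimum Hne) as [m [Hlow [tm [Htm Htm1]]]].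
  pose proof (Hlow tm Htm) as Htm0.
  destruct (classic (exists n : nat, forall t, E t -> t <= INR n)) as [Hbdd | Hunbdd].
  - destruct (least_nat _ Hbdd) as [n [Hup Hmin]].
    destruct (Nat.eq_dec m n) as [<- | Hmn].
    + left; exists m; intro t; split.
      * intro Ht; apply Rle_antisym; auto.
      * intros ->; replace (INR m) with tm by (specialize (Hup tm Htm); lra); exact Htm.
    + assert (Hmn' : (m < n)%nat).
      { apply not_INR in Hmn; specialize (Hup tm Htm); apply INR_lt; lra. }
      destruct n as [| p]; [lia |].
      assert (Hsup : exists t2, E t2 /\ INR p < t2).
      { apply NNPP; intro Hno.
        enough (Hp : (S p <= p)%nat) by lia.
        apply Hmin; intros t Ht; apply Rnot_lt_le; intro; apply Hno; eauto. }
      destruct Hsup as [t2 [Ht2 Ht2p]].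
      right; apply (integral_interval_of_interior E m (Some (S p))); [exact Hmn' | |].
      * intros t Ht; auto.
      * intros x Hx1 Hx2; rewrite S_INR in Hx2.
        destruct (Rlt_le_dec x t2).
        -- apply (unit_saturated_fill m tm t2); auto; lra.
        -- specialize (Hup t2 Ht2); rewrite S_INR in Hup.
           apply (E_saturated p t2); auto; lra.
  - right; apply (integral_interval_of_interior E m None); [exact I | |].
    + intros t Ht; auto.
    + intros x Hx _.
      destruct (INR_unbounded x) as [n Hn].
      destruct (not_all_ex_not _ _ (not_ex_all_not _ _ Hunbdd n)) as [t2 Ht2].
      apply imply_to_and in Ht2 as [Ht2 Ht2n].
      apply (unit_saturated_fill m tm t2); auto; lra.
Qed.

End UnitSaturatedSets.

(** * Time warps preserving clock regions *)

Lemma strict_increasing_le (f : R -> R) :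
  strict_increasing f -> forall x y, x <= y -> f x <= f y.
Proof.
  intros Hf x y [Hlt | ->]; [now apply Rlt_le, Hf | apply Rle_refl].
Qed.

Lemma sat_op_warp (f : R -> R) op x y (n : nat) :
  strict_increasing f -> shift_equivariant f ->
  sat_op op (x - y) (INR n) -> sat_op op (f x - f y) (INR n).
Proof.
  intros Hf Hshift.
  pose proof (strict_increasing_le f Hf) as Hle.
  specialize (Hshift y n).
  destruct op; simpl; intro H.
  - enough (f x < f (y + INR n)) by lra; apply Hf; lra.
  - enough (f x <= f (y + INR n)) by lra; apply Hle; lra.
  - replace x with (y + INR n) by lra; lra.
  - enough (f (y + INR n) <= f x) by lra; apply Hle; lra.
  - enough (f (y + INR n) < f x) by lra; apply Hf; lra.
Qed.

(* [t] is the absolute time reached so far: the delays are those of the run whose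
   absolute times are the images under [f] of the original ones. *)
Fixpoint warp_delays (f : R -> R) (t : R) (ds : list R) : list R :=
  match ds with
  | [] => []
  | d :: ds' => (f (t + d) - f t) :: warp_delays f (t + d) ds'
  end.

Lemma time_of_warp_delays (f : R -> R) ds i t :
  time_of (warp_delays f t ds) i = f (t + time_of ds i) - f t.
Proof.
  unfold time_of; revert i t.
  induction ds as [| d ds IH]; intros [| i] t; simpl; rewrite ?Rplus_0_r; try ring.
  rewrite IH, Rplus_assoc; ring.
Qed.

(* [r c] is the absolute time of the last reset of clock [c]. *)
Lemma run_from_warp (f : R -> R) :
  strict_increasing f -> shift_equivariant f ->
  forall gamma q t (r : clock -> R) (v v' : valuation) ds,
    (forall c, v c = t - r c) -> (forall c, v' c = f t - f (r c)) ->
    run_from q v gamma ds -> run_from q v' gamma (warp_delays f t ds).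
Proof.
  intros Hf Hshift.
  induction gamma as [| tau rest IH]; intros q t r v v' [| d ds] Hv Hv' Hrun;
    simpl in *; auto.
  destruct Hrun as (Hd & Hsrc & Hguard & Hrest); repeat split; [| exact Hsrc | |].
  - enough (f t <= f (t + d)) by lra; apply strict_increasing_le; auto; lra.
  - eapply Forall_impl; [| exact Hguard]; intros k.
    unfold sat_constr, delay; rewrite Hv, Hv'; intro Hk.
    replace (f t - f (r (c_clock k)) + (f (t + d) - f t))
      with (f (t + d) - f (r (c_clock k))) by ring.
    apply sat_op_warp; auto.
    now replace (t + d - r (c_clock k)) with (t - r (c_clock k) + d) by ring.
  - apply (IH _ (t + d) (fun c => if existsb (Nat.eqb c) (t_rst tau) then t + d else r c))
      with (3 := Hrest);
      intro c; unfold reset, delay; destruct existsb; rewrite ?Hv, ?Hv'; ring.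
Qed.

Section UnitWarp.

Variables a b : R.
Hypothesis a_unit : 0 < a < 1.
Hypothesis b_unit : 0 < b < 1.

(* The piecewise-linear bijection of [0, 1] sending a to b. *)
Definition unit_pl (u : R) : R :=
  if Rle_dec u a then u * (b / a) else b + (u - a) * ((1 - b) / (1 - a)).

Lemma unit_pl_strict : strict_increasing unit_pl.
Proof.
  assert (Hp : 0 < b / a) by (apply Rdiv_lt_0_compat; lra).
  assert (Hq : 0 < (1 - b) / (1 - a)) by (apply Rdiv_lt_0_compat; lra).
  assert (Ea : a * (b / a) = b) by (field; lra).
  intros u w Huw; unfold unit_pl.
  destruct (Rle_dec u a), (Rle_dec w a); nra.
Qed.

Lemma unit_pl_range u : 0 <= u < 1 -> 0 <= unit_pl u < 1.
Proof.
  intros Hu.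
  assert (E0 : unit_pl 0 = 0) by (unfold unit_pl; destruct Rle_dec; lra).
  assert (E1 : unit_pl 1 = 1).
  { unfold unit_pl; destruct Rle_dec; [lra | field; lra]. }
  pose proof (strict_increasing_le _ unit_pl_strict 0 u) as H0.
  pose proof (unit_pl_strict u 1) as H1.
  lra.
Qed.

Definition unit_warp (x : R) : R := IZR (Int_part x) + unit_pl (frac_part x).

Lemma unit_warp_int_add (z : Z) u :
  0 <= u < 1 -> unit_warp (IZR z + u) = IZR z + unit_pl u.
Proof.
  intro Hu.
  destruct (Int_part_frac_part_spec (IZR z + u) z u Hu eq_refl) as [Ez Eu].
  unfold unit_warp; now rewrite <- Ez, <- Eu.
Qed.

Lemma unit_warp_shift : shift_equivariant unit_warp.
Proof.
  intros x n.
  rewrite (Rplus_Int_part_frac_part x), INR_IZR_INZ.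
  replace (IZR (Int_part x) + frac_part x + IZR (Z.of_nat n))
    with (IZR (Int_part x + Z.of_nat n) + frac_part x) by (rewrite plus_IZR; ring).
  pose proof (base_fp x).
  rewrite !unit_warp_int_add, plus_IZR by lra; ring.
Qed.

Lemma unit_warp_strict : strict_increasing unit_warp.
Proof.
  intros x y Hxy.
  rewrite (Rplus_Int_part_frac_part x), (Rplus_Int_part_frac_part y) in *.
  pose proof (base_fp x); pose proof (base_fp y).
  rewrite !unit_warp_int_add by lra.
  destruct (Z.lt_trichotomy (Int_part x) (Int_part y)) as [Hlt | [Heq | Hgt]].
  - assert (IZR (Int_part x) + 1 <= IZR (Int_part y))
      by (rewrite <- succ_IZR; apply IZR_le; lia).
    pose proof (unit_pl_range (frac_part x)); pose proof (unit_pl_range (frac_part y)).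
    lra.
  - rewrite Heq in *; apply Rplus_lt_compat_l, unit_pl_strict; lra.
  - assert (IZR (Int_part y) + 1 <= IZR (Int_part x))
      by (rewrite <- succ_IZR; apply IZR_le; lia).
    lra.
Qed.

Lemma unit_warp_0 : unit_warp 0 = 0.
Proof.
  replace 0 with (IZR 0 + 0) at 1 by ring.
  rewrite unit_warp_int_add by lra.
  unfold unit_pl; destruct Rle_dec; lra.
Qed.

Lemma unit_warp_nat_add (k : nat) : unit_warp (INR k + a) = INR k + b.
Proof.
  rewrite INR_IZR_INZ, unit_warp_int_add by lra.
  unfold unit_pl; destruct Rle_dec; [field | ]; lra.
Qed.

End UnitWarp.

(** * Convex combinations of runs *)

Fixpoint mix_delays (l : R) (ds1 ds2 : list R) : list R :=
  match ds1, ds2 with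
  | d1 :: ds1', d2 :: ds2' => (l * d1 + (1 - l) * d2) :: mix_delays l ds1' ds2'
  | _, _ => []
  end.

Lemma sat_op_convex l op x1 x2 y : 0 <= l <= 1 ->
  sat_op op x1 y -> sat_op op x2 y -> sat_op op (l * x1 + (1 - l) * x2) y.
Proof.
  intro Hl; destruct op; simpl; intros H1 H2; try nra.
  all: try (subst; ring).
  all: destruct (Req_dec l 0) as [-> | Hl0]; nra.
Qed.

Lemma run_from_mix l : 0 <= l <= 1 ->
  forall gamma q (v1 v2 v : valuation) ds1 ds2,
    (forall c, v c = l * v1 c + (1 - l) * v2 c) ->
    run_from q v1 gamma ds1 -> run_from q v2 gamma ds2 ->
    run_from q v gamma (mix_delays l ds1 ds2).
Proof.
  intros Hl; induction gamma as [| tau rest IH];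
    intros q v1 v2 v [| d1 ds1] [| d2 ds2] Hv Hrun1 Hrun2; simpl in *; try tauto.
  destruct Hrun1 as (Hd1 & Hsrc & Hguard1 & Hrest1).
  destruct Hrun2 as (Hd2 & _ & Hguard2 & Hrest2).
  repeat split; [nra | exact Hsrc | |].
  - unfold sat_guard in *; rewrite Forall_forall in *; intros k Hk.
    specialize (Hguard1 k Hk); specialize (Hguard2 k Hk).
    unfold sat_constr, delay in *; rewrite Hv.
    replace (l * v1 (c_clock k) + (1 - l) * v2 (c_clock k) + (l * d1 + (1 - l) * d2))
      with (l * (v1 (c_clock k) + d1) + (1 - l) * (v2 (c_clock k) + d2)) by ring.
    now apply sat_op_convex.
  - apply IH with (2 := Hrest1) (3 := Hrest2).
    intro c; unfold reset, delay; destruct existsb; rewrite ?Hv; ring.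
Qed.

Lemma time_of_mix l ds1 ds2 i : length ds1 = length ds2 ->
  time_of (mix_delays l ds1 ds2) i = l * time_of ds1 i + (1 - l) * time_of ds2 i.
Proof.
  unfold time_of; revert ds2 i.
  induction ds1 as [| d1 ds1 IH]; intros [| d2 ds2] [| i] Hlen; simpl in *;
    try discriminate; try ring.
  rewrite IH by lia; ring.
Qed.

Lemma run_from_length gamma q v ds : run_from q v gamma ds -> length ds = length gamma.
Proof.
  revert q v ds; induction gamma as [| tau rest IH]; intros q v [| d ds] Hrun;
    simpl in *; try tauto.
  destruct Hrun as (_ & _ & _ & Hrest); f_equal; eauto.
Qed.

Lemma run_from_time_nonneg gamma q v ds i : run_from q v gamma ds -> 0 <= time_of ds i.
Proof.
  unfold time_of; revert q v ds i.
  induction gamma as [| tau rest IH]; intros q v [| d ds] [| i] Hrun;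
    simpl in *; try tauto; try lra.
  destruct Hrun as (Hd & _ & _ & Hrest); specialize (IH _ _ _ i Hrest); lra.
Qed.

Lemma times_nonneg A gamma i t : times A gamma i t -> 0 <= t.
Proof. intros [ds [Hrun <-]]; exact (run_from_time_nonneg _ _ _ _ _ Hrun). Qed.

Lemma times_order_convex A gamma i : order_convex (times A gamma i).
Proof.
  intros t1 t2 t [ds1 [Hrun1 E1]] [ds2 [Hrun2 E2]] Ht.
  destruct (Req_dec t1 t2) as [<- | Hne].
  { replace t with t1 by lra; now exists ds1. }
  set (l := (t2 - t) / (t2 - t1)).
  assert (Hl : l * (t2 - t1) = t2 - t) by (unfold l; field; lra).
  assert (Hl0 : 0 <= l) by (unfold l; apply Rle_mult_inv_pos; lra).
  exists (mix_delays l ds1 ds2); split.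
  - eapply run_from_mix; [nra | | exact Hrun1 | exact Hrun2].
    intro c; unfold zero_val; ring.
  - rewrite time_of_mix, E1, E2; [nra |].
    now rewrite (run_from_length _ _ _ _ Hrun1), (run_from_length _ _ _ _ Hrun2).
Qed.

Lemma times_unit_saturated A gamma i : unit_saturated (times A gamma i).
Proof.
  intros k t t' Ht Ht' [ds [Hrun <-]].
  set (a := time_of ds i - INR k); set (b := t' - INR k).
  assert (Ha : 0 < a < 1) by (unfold a; lra).
  assert (Hb : 0 < b < 1) by (unfold b; lra).
  exists (warp_delays (unit_warp a b) 0 ds); split.
  - apply (run_from_warp _ (unit_warp_strict a b Ha Hb) (unit_warp_shift a b)
      _ _ 0 (fun _ => 0) zero_val) with (3 := Hrun);
      intro c; unfold zero_val; ring.
  - rewrite time_of_warp_delays, Rplus_0_l, unit_warp_0 by lra.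
    replace (time_of ds i) with (INR k + a) by (unfold a; ring).
    rewrite unit_warp_nat_add by lra; unfold b; ring.
Qed.

Theorem proposition2 (A : eNTA) (gamma : list transition) :
  well_formed A -> is_path A gamma -> reachable A gamma ->
  forall i : nat, (1 <= i <= length gamma)%nat ->
    integral_point (times A gamma i) \/ integral_interval (times A gamma i).
Proof.
  intros _ _ [ds Hrun] i _.
  apply unit_saturated_integral_shape.
  - apply times_nonneg.
  - apply times_order_convex.
  - apply times_unit_saturated.
  - now exists (time_of ds i), ds.
Qed.
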